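(* (1-cut in MRL.) For every sequent $\Gamma$ and every formula $A$ of MRL: if $\Gamma, \emptyset{:}A$ is derivable in MRL, then $\Gamma$ is derivable in MRL.
   Context: Fix a nonempty set $\mathcal{R}$ (the set of roles). For $R\subseteq\mathcal{R}$ write $\overline{R}=\mathcal{R}\setminus R$. An ultrafilter $\mathcal{U}$ on $\mathcal{R}$ is a set of subsets of $\mathcal{R}$ such that $\mathcal{R}\in\mathcal{U}$; $R_1\in\mathcal{U}$ and $R_1\subseteq R_2$ imply $R_2\in\mathcal{U}$; $R_1,R_2\in\mathcal{U}$ imply $R_1\cap R_2\in\mathcal{U}$; and for every $R\subseteq\mathcal{R}$, $R\in\mathcal{U}$ or $\overline{R}\in\mathcal{U}$. An endomorphism is any function $f:\mathcal{R}\to\mathcal{R}$, and $f^{-1}(R)$ denotes the preimage of $R$. Fix a first-order language of terms $t$ with variables $x$, and a collection of primitive (atomic) formulas $a$ (which may contain terms). Formulas of MRL: $A ::= a \mid \neg_f(A) \mid A_1\wedge_{\mathcal{U}} A_2 \mid A\supset_{f,\mathcal{U}} B \mid \forall_{\mathcal{U}}(\lambda x.A)$, with $f$ an endomorphism and $\mathcal{U}$ an ultrafilter on $\mathcal{R}$; $x$ is bound in $\forall_{\mathcal{U}}(\lambda x.A)$, and $A[t/x]$ is capture-avoiding substitution. An i-formula is a pair $R{:}A$ with $R\subseteq\mathcal{R}$ and $A$ a formula; a sequent is a finite multiset of i-formulas, and comma denotes multiset union. Derivability in MRL is given by the rules (premises $\Rightarrow$ conclusion, $\Gamma,\Gamma_1,\Gamma_2$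 arbitrary sequents): (Id) $\Gamma, R_1{:}a,\ldots,R_n{:}a$ is derivable whenever $n\ge1$ and $R_1,\ldots,R_n$ are pairwise disjoint with union $\mathcal{R}$; (Weaken) $\Gamma,R{:}A,R{:}A \Rightarrow \Gamma,R{:}A$; ($\neg$) $\Gamma, f^{-1}(R){:}A \Rightarrow \Gamma, R{:}\neg_f(A)$; ($\wedge$-neg-l) if $R\notin\mathcal{U}$: $\Gamma,R{:}A\Rightarrow\Gamma,R{:}A\wedge_{\mathcal{U}}B$; ($\wedge$-neg-r) if $R\notin\mathcal{U}$: $\Gamma,R{:}B\Rightarrow\Gamma,R{:}A\wedge_{\mathcal{U}}B$; ($\wedge$-pos) if $R\in\mathcal{U}$: $(\Gamma,R{:}A;\ \Gamma,R{:}B)\Rightarrow\Gamma,R{:}A\wedge_{\mathcal{U}}B$; ($\supset$-neg) if $R\notin\mathcal{U}$: $\Gamma,f^{-1}(R){:}A,R{:}B\Rightarrow\Gamma,R{:}A\supset_{f,\mathcal{U}}B$; ($\supset$-pos) if $R\in\mathcal{U}$: $(\Gamma_1,f^{-1}(R){:}A;\ \Gamma_2,R{:}B)\Rightarrow\Gamma_1,\Gamma_2,R{:}A\supset_{f,\mathcal{U}}B$; ($\forall$-neg) if $R\notin\mathcal{U}$ and $t$ is a term: $\Gamma,R{:}A[t/x]\Rightarrow\Gamma,R{:}\forall_{\mathcal{U}}(\lambda x.A)$; ($\forall$-pos) if $R\in\mathcal{U}$ and $x$ has no free occurrence in $\Gamma$: $\Gamma,R{:}A\Rightarrow\Gamma,R{:}\forall_{\mathcal{U}}(\lambda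 x.A)$. A sequent is derivable in MRL if it is the conclusion of a finite derivation tree built from these rules. *)

From Stdlib Require Import List Arith Permutation.
Import ListNotations.

Set Implicit Arguments.

Section MRL.

Variables (Role : Type) (Fsym Psym : Type).

Definition rset := Role -> Prop.
Definition rfull : rset := fun _ => True.
Definition rempty : rset := fun _ => False.
Definition rcompl (R : rset) : rset := fun r => ~ R r.
Definition rinter (R1 R2 : rset) : rset := fun r => R1 r /\ R2 r.
Definition rsubset (R1 R2 : rset) : Prop := forall r, R1 r -> R2 r.
Definition preim (f : Role -> Role) (R : rset) : rset := fun r => R (f r).

Record ultrafilter := {
  uf_mem :> rset -> Prop;
  uf_full : uf_mem rfull;
  uf_up : forall R1 R2, uf_mem R1 -> rsubset R1 R2 -> uf_mem R2;
  uf_inter : forall R1 R2, uf_mem R1 -> uf_mem R2 -> uf_mem (rinter R1 R2);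
  uf_ult : forall R, uf_mem R \/ uf_mem (rcompl R)
}.

Inductive term : Type :=
| Var : nat -> term
| App : Fsym -> list term -> term.

Inductive formula : Type :=
| Atom : Psym -> list term -> formula
| Neg : (Role -> Role) -> formula -> formula
| And : ultrafilter -> formula -> formula -> formula
| Imp : (Role -> Role) -> ultrafilter -> formula -> formula -> formula
| All : ultrafilter -> formula -> formula.   (* binds de Bruijn index 0 *)

Fixpoint lift_term (c : nat) (t : term) : term :=
  match t with
  | Var n => Var (if n <? c then n else S n)
  | App f ts => App f (map (lift_term c) ts)
  end.

Fixpoint subst_term (k : nat) (u : term) (t : term) : term :=
  match t with
  | Var n => if n <? k then Var n else if n =? k then u else Var (pred n)
  | App f ts => App f (map (subst_term k u) ts)
  end.

Fixpoint lift_form (c : nat) (A : formula) : formula :=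
  match A with
  | Atom p ts => Atom p (map (lift_term c) ts)
  | Neg f B => Neg f (lift_form c B)
  | And U B C => And U (lift_form c B) (lift_form c C)
  | Imp f U B C => Imp f U (lift_form c B) (lift_form c C)
  | All U B => All U (lift_form (S c) B)
  end.

Fixpoint subst_form (k : nat) (u : term) (A : formula) : formula :=
  match A with
  | Atom p ts => Atom p (map (subst_term k u) ts)
  | Neg f B => Neg f (subst_form k u B)
  | And U B C => And U (subst_form k u B) (subst_form k u C)
  | Imp f U B C => Imp f U (subst_form k u B) (subst_form k u C)
  | All U B => All U (subst_form (S k) (lift_term 0 u) B)
  end.

Definition iformula := (rset * formula)%type.
(* A sequent is a finite multiset of i-formulas: a list up to permutation. *)
Definition sequent := list iformula.

Definition lift_seq (G : sequent) : sequent :=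
  map (fun X => (fst X, lift_form 0 (snd X))) G.

Definition rdisjoint (R1 R2 : rset) : Prop := forall r, R1 r -> R2 r -> False.

Inductive derivable : sequent -> Prop :=
| d_perm : forall G D, Permutation G D -> derivable G -> derivable D
| d_id : forall G p ts (Rs : list rset),
    Rs <> [] ->
    ForallOrdPairs rdisjoint Rs ->
    (forall r, exists R, In R Rs /\ R r) ->
    derivable (map (fun R => (R, Atom p ts)) Rs ++ G)
| d_weaken : forall G R A,
    derivable ((R, A) :: (R, A) :: G) -> derivable ((R, A) :: G)
| d_neg : forall G R f A,
    derivable ((preim f R, A) :: G) -> derivable ((R, Neg f A) :: G)
| d_and_neg_l : forall G R (U : ultrafilter) A B, ~ U R ->
    derivable ((R, A) :: G) -> derivable ((R, And U A B) :: G)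
| d_and_neg_r : forall G R (U : ultrafilter) A B, ~ U R ->
    derivable ((R, B) :: G) -> derivable ((R, And U A B) :: G)
| d_and_pos : forall G R (U : ultrafilter) A B, U R ->
    derivable ((R, A) :: G) -> derivable ((R, B) :: G) ->
    derivable ((R, And U A B) :: G)
| d_imp_neg : forall G R f (U : ultrafilter) A B, ~ U R ->
    derivable ((preim f R, A) :: (R, B) :: G) ->
    derivable ((R, Imp f U A B) :: G)
| d_imp_pos : forall G1 G2 R f (U : ultrafilter) A B, U R ->
    derivable ((preim f R, A) :: G1) -> derivable ((R, B) :: G2) ->
    derivable ((R, Imp f U A B) :: G1 ++ G2)
| d_all_neg : forall G R (U : ultrafilter) A t, ~ U R ->
    derivable ((R, subst_form 0 t A) :: G) ->
    derivable ((R, All U A) :: G)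
| d_all_pos : forall G R (U : ultrafilter) A, U R ->
    (* eigenvariable condition in de Bruijn form: index 0 is fresh for the
       lifted context *)
    derivable ((R, A) :: lift_seq G) ->
    derivable ((R, All U A) :: G).

End MRL.

(* An i-formula labelled by the empty role set is inert.  Preimages of the
   empty set are empty, so every rule whose principal i-formula is labelled by
   the empty set has a premise in which the subformulas are again labelled by
   the empty set; by induction on derivations every multiset of such
   i-formulas can therefore be erased at once.  In an axiom the empty-labelled
   atoms are empty blocks of the partition of the (nonempty) set of roles, and
   the remaining blocks still form a partition. *)

From Stdlib Require Import List Arith Lia Permutation Morphisms.
Import ListNotations.

Section Lists.
Variable T : Type.
Implicit Types (x : T) (l E G : list T).

Lemma Permutation_cons_app_cases x l E G :
  Permutation (x :: l) (E ++ G) ->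
  (exists E', Permutation E (x :: E') /\ Permutation l (E' ++ G)) \/
  (exists G', Permutation G (x :: G') /\ Permutation l (E ++ G')).
Proof.
  intros HP.
  assert (Hx : In x (E ++ G)) by (rewrite <- HP; left; reflexivity).
  apply in_app_or in Hx as [Hx | Hx]; apply in_split in Hx as (l1 & l2 & ->).
  - left; exists (l1 ++ l2); split; [symmetry; apply Permutation_middle |].
    rewrite <- app_assoc in HP; apply Permutation_cons_app_inv in HP.
    rewrite app_assoc in HP; exact HP.
  - right; exists (l1 ++ l2); split; [symmetry; apply Permutation_middle |].
    rewrite app_assoc in HP; apply Permutation_cons_app_inv in HP.
    rewrite <- app_assoc in HP; exact HP.
Qed.

Lemma Permutation_app_app_cases l1 l2 E G :
  Permutation (l1 ++ l2) (E ++ G) ->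
  exists E1 E2 G1 G2, Permutation E (E1 ++ E2) /\ Permutation G (G1 ++ G2) /\
    Permutation l1 (E1 ++ G1) /\ Permutation l2 (E2 ++ G2).
Proof.
  revert l2 E G; induction l1 as [|x l1 IH]; intros l2 E G HP.
  - exists [], E, [], G; repeat split; auto.
  - apply Permutation_cons_app_cases in HP as [(E' & HE & HP) | (G' & HG & HP)];
      destruct (IH _ _ _ HP) as (E1 & E2 & G1 & G2 & HE' & HG' & H1 & H2).
    + exists (x :: E1), E2, G1, G2; repeat split; cbn; auto.
      rewrite HE, HE'; reflexivity.
    + exists E1, E2, (x :: G1), G2; repeat split; auto.
      * rewrite HG, HG'; reflexivity.
      * rewrite H1; apply Permutation_middle.
Qed.

Lemma ForallOrdPairs_remove (P : T -> T -> Prop) l1 x l2 :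
  ForallOrdPairs P (l1 ++ x :: l2) -> ForallOrdPairs P (l1 ++ l2).
Proof.
  induction l1 as [|y l1 IH]; cbn; intros H; inversion H as [|? ? Hy ?]; subst; auto.
  constructor; auto.
  rewrite Forall_forall in *; intros z Hz; apply Hy.
  apply in_app_or in Hz as [? | ?]; apply in_or_app; cbn; auto.
Qed.

End Lists.

Section Terms.
Variable Fsym : Type.

Fixpoint term_ind_nested (P : term Fsym -> Prop)
  (HVar : forall n, P (Var Fsym n))
  (HApp : forall f ts, (forall t, In t ts -> P t) -> P (App f ts))
  (t : term Fsym) : P t :=
  match t with
  | Var _ n => HVar n
  | App f ts => HApp f ts
      ((fix all_in (l : list (term Fsym)) : forall t, In t l -> P t :=
          match l with
          | [] => fun t (H : In t []) => False_ind _ H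
          | x :: l => fun t H =>
              match H with
              | or_introl E => eq_ind x P (term_ind_nested P HVar HApp x) t E
              | or_intror H' => all_in l t H'
              end
          end) ts)
  end.

Ltac index_arith :=
  repeat (cbn [lift_term subst_term pred] in *; match goal with
  | |- context [?a <? ?b] => destruct (Nat.ltb_spec a b)
  | |- context [?a =? ?b] => destruct (Nat.eqb_spec a b)
  end); try reflexivity; try (f_equal; lia); try (exfalso; lia).

Ltac app_congr :=
  cbn [lift_term subst_term]; f_equal; rewrite ?map_map; apply map_ext_in; auto.

Lemma lift_term_lift_comm (t : term Fsym) c c' : c <= c' ->
  lift_term c (lift_term c' t) = lift_term (S c') (lift_term c t).
Proof.
  revert c c'; induction t using term_ind_nested; intros c c' Hc; [index_arith|app_congr].
Qed.

Lemma subst_term_lift_cancel (t : term Fsym) c u :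
  subst_term c u (lift_term c t) = t.
Proof.
  revert c; induction t as [n|f ts IH] using term_ind_nested; intros c; [index_arith|].
  cbn; f_equal; rewrite map_map, <- map_id; apply map_ext_in; auto.
Qed.

Lemma subst_term_lift_comm (t : term Fsym) c k u : c <= k ->
  subst_term (S k) (lift_term c u) (lift_term c t) = lift_term c (subst_term k u t).
Proof.
  revert c k; induction t using term_ind_nested; intros c k Hc; [index_arith|app_congr].
Qed.

Lemma subst_term_subst_term (t : term Fsym) j k v u : j <= k ->
  subst_term k u (subst_term j v t) =
  subst_term j (subst_term k u v) (subst_term (S k) (lift_term j u) t).
Proof.
  revert j k; induction t using term_ind_nested; intros j k Hj; [|app_congr].
  index_arith; subst; rewrite ?subst_term_lift_cancel; index_arith.
Qed.

End Terms.

Section Formulas.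
Variables Role Fsym Psym : Type.

Lemma subst_form_lift_cancel (A : formula Role Fsym Psym) c u :
  subst_form c u (lift_form c A) = A.
Proof.
  revert c u; induction A as [p ts|g B IH|U B IHB C IHC|g U B IHB C IHC|U B IH];
    intros c u; cbn; f_equal; auto.
  rewrite map_map, <- map_id; apply map_ext; intros; apply subst_term_lift_cancel.
Qed.

Lemma subst_form_lift_comm (A : formula Role Fsym Psym) c k u : c <= k ->
  subst_form (S k) (lift_term c u) (lift_form c A) = lift_form c (subst_form k u A).
Proof.
  revert c k u; induction A as [p ts|g B IH|U B IHB C IHC|g U B IHB C IHC|U B IH];
    intros c k u Hc; cbn; f_equal; auto.
  - rewrite !map_map; apply map_ext; intros; apply subst_term_lift_comm; lia.
  - rewrite lift_term_lift_comm by lia; apply IH; lia.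
Qed.

Lemma subst_form_subst_form (A : formula Role Fsym Psym) j k v u : j <= k ->
  subst_form k u (subst_form j v A) =
  subst_form j (subst_term k u v) (subst_form (S k) (lift_term j u) A).
Proof.
  revert j k v u; induction A as [p ts|g B IH|U B IHB C IHC|g U B IHB C IHC|U B IH];
    intros j k v u Hj; cbn; f_equal; auto.
  - rewrite !map_map; apply map_ext; intros; apply subst_term_subst_term; lia.
  - rewrite IH, subst_term_lift_comm, <- lift_term_lift_comm by lia; reflexivity.
Qed.

End Formulas.

Section Derivability.
Variables Role Fsym Psym : Type.
Implicit Types (G D : sequent Role Fsym Psym).

Definition subst_seq k (u : term Fsym) G : sequent Role Fsym Psym :=
  map (fun X => (fst X, subst_form k u (snd X))) G.

Lemma derivable_subst G k u : derivable G -> derivable (subst_seq k u G).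
Proof.
  intros HG; revert k u; induction HG; intros k u; unfold subst_seq in *; cbn in *;
    rewrite ?map_app in *.
  - eapply d_perm; [apply Permutation_map; eassumption | auto].
  - rewrite map_map; apply d_id; auto.
  - apply d_weaken; auto.
  - apply d_neg; auto.
  - apply d_and_neg_l; auto.
  - apply d_and_neg_r; auto.
  - apply d_and_pos; auto.
  - apply d_imp_neg; auto.
  - apply d_imp_pos; auto.
  - apply d_all_neg with (t := subst_term k u t); auto.
    rewrite <- subst_form_subst_form by lia; apply IHHG.
  - apply d_all_pos; auto.
    specialize (IHHG (S k) (lift_term 0 u)); unfold lift_seq in *; rewrite map_map in *.
    erewrite map_ext; [exact IHHG |].
    intros [R0 B0]; cbn; rewrite subst_form_lift_comm by lia; reflexivity.
Qed.

Lemma derivable_unlift G : derivable (lift_seq G) -> derivable G.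
Proof.
  intros HG; apply derivable_subst with (k := 0) (u := Var Fsym 0) in HG.
  unfold subst_seq, lift_seq in HG; rewrite map_map in HG.
  erewrite map_ext, map_id in HG; [exact HG |].
  intros [R A]; cbn; rewrite subst_form_lift_cancel; reflexivity.
Qed.

Lemma derivable_app G D : derivable G -> derivable (G ++ D).
Proof.
  intros HG; revert D; induction HG; intros D'; cbn in *.
  - eapply d_perm; [apply Permutation_app_tail; eassumption | apply IHHG].
  - rewrite <- app_assoc; apply d_id; auto.
  - apply d_weaken; auto.
  - apply d_neg; auto.
  - apply d_and_neg_l; auto.
  - apply d_and_neg_r; auto.
  - apply d_and_pos; auto.
  - apply d_imp_neg; auto.
  - rewrite <- app_assoc; apply d_imp_pos; auto.
  - apply d_all_neg with (t := t); auto.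
  - apply d_all_pos; auto.
    unfold lift_seq in *; rewrite map_app; apply IHHG.
Qed.

End Derivability.

Section Erasure.
Variables Role Fsym Psym : Type.
Implicit Types (X Y : iformula Role Fsym Psym) (G D E : sequent Role Fsym Psym).

#[local] Instance derivable_Permutation :
  Proper (@Permutation _ ==> iff) (@derivable Role Fsym Psym).
Proof. intros G D HP; split; apply d_perm; [| symmetry]; exact HP. Qed.

Definition vacuous X : Prop := forall r, ~ fst X r.

Definition erasable D : Prop :=
  forall E G, Permutation D (E ++ G) -> Forall vacuous E -> derivable G.

Lemma erasable_perm D D' : Permutation D D' -> erasable D -> erasable D'.
Proof. intros HP IH E G HP'; apply IH; rewrite HP; exact HP'. Qed.

Lemma erasable_binary D1 D2 X G :
  (vacuous X -> Forall vacuous D1) ->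
  (forall G', derivable (D1 ++ G') -> derivable (D2 ++ G') -> derivable (X :: G')) ->
  erasable (D1 ++ G) -> erasable (D2 ++ G) -> erasable (X :: G).
Proof.
  intros HD1 Hrule IH1 IH2 E G0 HP HE.
  apply Permutation_cons_app_cases in HP as [(E' & HE' & HP) | (G' & HG0 & HP)].
  - rewrite HE' in HE; apply Forall_cons_iff in HE as [HX HE].
    apply (IH1 (D1 ++ E')); [rewrite HP, app_assoc; reflexivity | apply Forall_app; auto].
  - rewrite HG0; apply Hrule; [apply (IH1 E) | apply (IH2 E)]; auto;
      rewrite HP; apply Permutation_app_swap_app.
Qed.

Lemma erasable_unary D1 X G :
  (vacuous X -> Forall vacuous D1) ->
  (forall G', derivable (D1 ++ G') -> derivable (X :: G')) ->
  erasable (D1 ++ G) -> erasable (X :: G).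
Proof. intros HD1 Hrule IH; apply (erasable_binary D1 D1); auto. Qed.

Lemma erasable_split X Y1 Y2 G1 G2 :
  (vacuous X -> vacuous Y1) ->
  (forall G1' G2', derivable (Y1 :: G1') -> derivable (Y2 :: G2') ->
     derivable (X :: G1' ++ G2')) ->
  erasable (Y1 :: G1) -> erasable (Y2 :: G2) -> erasable (X :: G1 ++ G2).
Proof.
  intros HY1 Hrule IH1 IH2 E G HP HE.
  apply Permutation_cons_app_cases in HP as [(E' & HE' & HP) | (G' & HG & HP)];
    apply Permutation_app_app_cases in HP as (E1 & E2 & H1 & H2 & HE12 & HG12 & HG1 & HG2).
  - rewrite HE' in HE; apply Forall_cons_iff in HE as [HX HE].
    rewrite HE12 in HE; apply Forall_app in HE as [HE1 _].
    rewrite HG12; apply derivable_app, (IH1 (Y1 :: E1)); [rewrite HG1; reflexivity | auto].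
  - rewrite HE12 in HE; apply Forall_app in HE as [HE1 HE2].
    rewrite HG, HG12; apply Hrule; [apply (IH1 E1) | apply (IH2 E2)]; auto;
      [rewrite HG1 | rewrite HG2]; apply Permutation_middle.
Qed.

Lemma Forall_vacuous_lift_seq E : Forall vacuous (lift_seq E) <-> Forall vacuous E.
Proof. unfold lift_seq; rewrite Forall_map; reflexivity. Qed.

(* The ultrafilter axioms do not exclude the empty set, so [d_all_pos] may
   introduce an empty-labelled quantifier; erasing it leaves the lifted
   context, which substitution for the eigenvariable turns back into [G]. *)
Lemma erasable_all_pos R (U : ultrafilter Role) A G :
  U R -> erasable ((R, A) :: lift_seq G) -> erasable ((R, All U A) :: G).
Proof.
  intros HU IH E G0 HP HE.
  apply Permutation_cons_app_cases in HP as [(E' & HE' & HP) | (G' & HG0 & HP)].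
  - rewrite HE' in HE; apply Forall_cons_iff in HE as [HX HE].
    apply derivable_unlift, (IH ((R, A) :: lift_seq E')).
    + cbn; unfold lift_seq; rewrite HP, map_app; reflexivity.
    + constructor; [exact HX | apply Forall_vacuous_lift_seq; exact HE].
  - rewrite HG0; apply d_all_pos; [exact HU |].
    apply (IH (lift_seq E)); [| apply Forall_vacuous_lift_seq; exact HE].
    unfold lift_seq; rewrite HP, map_app; apply Permutation_middle.
Qed.

Definition rpartition (Rs : list (rset Role)) : Prop :=
  ForallOrdPairs (@rdisjoint Role) Rs /\ forall r, exists R, In R Rs /\ R r.

Definition id_sequent G : Prop :=
  exists p ts Rs G', rpartition Rs /\
    Permutation G (map (fun R => (R, @Atom Role Fsym Psym p ts)) Rs ++ G').

(* Inhabitedness is needed: over an empty set of roles [[rempty]] is a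
   partition, and erasing it leaves no atom at all. *)
Lemma derivable_id_sequent G : inhabited Role -> id_sequent G -> derivable G.
Proof.
  intros [r] (p & ts & Rs & G' & [Hdisj Hcover] & HP); rewrite HP.
  apply d_id; auto.
  destruct (Hcover r) as (R & HR & _); intros ->; destruct HR.
Qed.

Lemma rpartition_remove Rs1 R Rs2 :
  rpartition (Rs1 ++ R :: Rs2) -> (forall r, ~ R r) -> rpartition (Rs1 ++ Rs2).
Proof.
  intros [Hdisj Hcover] HR; split; [eapply ForallOrdPairs_remove; eauto |].
  intros r; destruct (Hcover r) as (R' & HR' & Hr).
  exists R'; split; [| exact Hr].
  apply in_app_or in HR' as [? | [<- | ?]]; apply in_or_app; auto.
  destruct (HR r Hr).
Qed.

Lemma id_sequent_remove X G : id_sequent (X :: G) -> vacuous X -> id_sequent G.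
Proof.
  intros (p & ts & Rs & G' & HRs & HP) HX.
  assert (HXin : In X (map (fun R => (R, Atom Role p ts)) Rs ++ G'))
    by (rewrite <- HP; left; reflexivity).
  apply in_app_or in HXin as [HXin | HXin].
  - apply in_map_iff in HXin as (R & <- & HR); apply in_split in HR as (Rs1 & Rs2 & ->).
    exists p, ts, (Rs1 ++ Rs2), G'; split; [eapply rpartition_remove; eauto |].
    rewrite map_app, <- app_assoc in *; eapply Permutation_cons_app_inv, HP.
  - apply in_split in HXin as (G1 & G2 & ->).
    exists p, ts, Rs, (G1 ++ G2); split; [exact HRs |].
    rewrite app_assoc in *; eapply Permutation_cons_app_inv, HP.
Qed.

Lemma id_sequent_remove_all E G :
  id_sequent (E ++ G) -> Forall vacuous E -> id_sequent G.
Proof.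
  induction E as [|X E IH]; intros HEG HE; [exact HEG |].
  apply Forall_cons_iff in HE as [HX HE]; apply IH, HE.
  exact (id_sequent_remove X (E ++ G) HEG HX).
Qed.

Lemma erasable_id p ts Rs G : inhabited Role -> rpartition Rs ->
  erasable (map (fun R => (R, @Atom Role Fsym Psym p ts)) Rs ++ G).
Proof.
  intros Hne HRs E G0 HP HE.
  apply derivable_id_sequent, (id_sequent_remove_all E); auto.
  exists p, ts, Rs, G; split; [exact HRs | symmetry; exact HP].
Qed.

Lemma derivable_erasable D : inhabited Role -> derivable D -> erasable D.
Proof.
  intros Hne HD; induction HD.
  - eapply erasable_perm; eauto.
  - apply erasable_id; [| split]; auto.
  - apply (erasable_unary [(R, A); (R, A)]); auto; intros; now apply d_weaken.
  - apply (erasable_unary [(preim f R, A)]); auto; [| intros; now apply d_neg].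
    intros HX; repeat constructor; intros r; apply (HX (f r)).
  - apply (erasable_unary [(R, A)]); auto; intros; now apply d_and_neg_l.
  - apply (erasable_unary [(R, B)]); auto; intros; now apply d_and_neg_r.
  - apply (erasable_binary [(R, A)] [(R, B)]); auto; intros; now apply d_and_pos.
  - apply (erasable_unary [(preim f R, A); (R, B)]); auto; [| intros; now apply d_imp_neg].
    intros HX; repeat constructor; [intros r; apply (HX (f r)) | exact HX].
  - apply (erasable_split _ (preim f R, A) (R, B)); auto; [| intros; now apply d_imp_pos].
    intros HX r; apply (HX (f r)).
  - apply (erasable_unary [(R, subst_form 0 t A)]); auto; intros; now apply d_all_neg with t.
  - apply erasable_all_pos; auto.
Qed.

End Erasure.

Theorem mainTheorem3 (Role : Type) (Fsym Psym : Type) (Hne : inhabited Role)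
  (G : sequent Role Fsym Psym) (A : formula Role Fsym Psym) :
  derivable (G ++ [(@rempty Role, A)]) -> derivable G.
Proof.
  intros HG; apply (derivable_erasable _ _ _ _ Hne HG [(@rempty Role, A)] G).
  - apply Permutation_app_comm.
  - repeat constructor; intros r Hr; exact Hr.
Qed.
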